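(* Let $P$ be a poset and $\varphi:\Delta^n\to N(P)$ a not-necessarily injective simplicial map. Then there exist an injective simplicial map $\bar\varphi:\Delta^k\to N(P)$ and a topological space $K$ such that $\|\Delta^\varphi\|_P$ is a retract (in $\mathrm{Top}_P$) of $\|\Delta^{\bar\varphi}\|_P\otimes K$.
   Context: $\mathrm{Top}_P$: $\Delta$-generated spaces $X$ with continuous $\varphi_X:X\to P$ ($P$ with the Alexandrov topology), maps commuting over $P$. $\varphi_P:\|N(P)\|\to P$ sends a point $(\{p_0<\dots<p_m\},t)$, $t$ in the interior of $\Delta^m$, to $p_m$. For a simplicial map $\psi:\Delta^m\to N(P)$, $\|\Delta^\psi\|_P=(\|\Delta^m\|,\varphi_P\circ\|\psi\|)$. For a space $K$, $(X,\varphi_X)\otimes K=(X\times K,\varphi_X\circ pr_X)$. *)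

From HB Require Import structures.
From mathcomp Require Import all_boot all_order all_algebra.
From mathcomp Require Import all_classical all_reals all_analysis.
Set Implicit Arguments. Unset Strict Implicit. Unset Printing Implicit Defensive.
Import Order.TTheory GRing.Theory Num.Theory.
Import numFieldNormedType.Exports.
Local Open Scope classical_set_scope.
Local Open Scope ring_scope.

Definition simplex (R : realType) (n : nat) : set 'rV[R]_n.+1 :=
  [set t | (forall i, 0 <= t ord0 i) /\ \sum_(i < n.+1) t ord0 i = 1].
Arguments simplex R n : clear implicits.

(* A simplicial map Delta^n -> N(P) is a monotone map [n] -> P;
   it is injective iff the map on vertices is injective. *)
Definition simplicial_map (d : Order.disp_t) (P : porderType d) (n : nat)
  (phi : 'I_n.+1 -> P) : Prop := {homo phi : i j / (i <= j)%O}.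

Definition last_vertex (R : realType) (n : nat) (t : 'rV[R]_n.+1) : 'I_n.+1 :=
  inord (\max_(i < n.+1 | t ord0 i != 0%R) (i : nat))%N.

(* The stratification of ||Delta^phi||_P = (|Delta^n|, phi_P o ||phi||):
   a point t in the interior of the face spanned by the vertices
   {i | t_i <> 0} is sent by ||phi|| into the interior of the simplex
   {phi(i) | t_i <> 0} of N(P), and phi_P sends it to the largest vertex,
   i.e. phi (last_vertex t) since phi is monotone. *)
Definition strat (R : realType) (d : Order.disp_t) (P : porderType d) (n : nat)
  (phi : 'I_n.+1 -> P) (t : 'rV[R]_n.+1) : P := phi (last_vertex t).

Definition singular_simplex (R : realType) (X : topologicalType) (m : nat)
  (sigma : 'rV[R]_m.+1 -> X) : Prop :=
  {within simplex R m, continuous sigma}.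

Definition Delta_generated (R : realType) (X : topologicalType) : Prop :=
  forall U : set X,
    (forall (m : nat) (sigma : 'rV[R]_m.+1 -> X),
        singular_simplex sigma ->
        exists V : set 'rV[R]_m.+1, open V /\
          sigma @^-1` U `&` simplex R m = V `&` simplex R m) ->
    open U.

(* This is continuity of maps out of the
   product X x K taken in the category of Delta-generated spaces. *)
Definition Delta_continuous (R : realType) (X Y : topologicalType)
  (A : set X) (f : X -> Y) : Prop :=
  forall (m : nat) (sigma : 'rV[R]_m.+1 -> X),
    singular_simplex sigma -> sigma @` simplex R m `<=` A ->
    {within simplex R m, continuous (f \o sigma)}.

From HB Require Import structures.
From mathcomp Require Import all_boot all_order all_algebra.
From mathcomp Require Import all_classical all_reals all_analysis.
From mathcomp Require Import lra.
Set Implicit Arguments. Unset Strict Implicit. Unset Printing Implicit Defensive.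
Import Order.TTheory GRing.Theory Num.Theory.
Import numFieldNormedType.Exports.
Local Open Scope classical_set_scope.
Local Open Scope ring_scope.

(* Factor [phi] as [phibar \o s] with [phibar] injective and [s] a monotone
   surjection.  The affine map |s| : |Delta^n| -> |Delta^k| ([collapse s])
   adds up barycentric coordinates along the fibres of [s]; it has a
   continuous one-sided inverse once an auxiliary point [x] of R^(n+1) is
   remembered: [redistribute s u x] spreads the mass [u_j] over the fibre of
   [j] following the cumulative sums of the positive part of [x], clamped to
   the window [u_0 + ... + u_(j-1), u_0 + ... + u_j].  Then
   [collapse (redistribute u x) = u] and [redistribute (collapse t) t = t],
   and the last vertex of [collapse t] is the image under [s] of the last
   vertex of [t], so both maps lie over [P]. *)

Section Continuity.
Variable R : realType.

Lemma continuous_row (T : topologicalType) m (f : T -> 'rV[R]_m) :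
  (forall j, continuous (fun x => f x ord0 j)) -> continuous f.
Proof.
move=> fc x; apply/cvg_ballP => e e0.
have near_coord i j : \forall y \near x, ball (f x i j) e (f y i j).
  by rewrite (ord1 i); move/cvg_ballP: (fc j x); apply.
have near_row i : \forall y \near x, forall j, ball (f x i j) e (f y i j).
  by apply: filter_forall => j; exact: near_coord.
near=> y; split => //; near: y; exact: filter_forall near_row.
Unshelve. all: by end_near. Qed.

Lemma continuous_minr (T : topologicalType) (f g : T -> R) :
  continuous f -> continuous g -> continuous (fun x => Num.min (f x) (g x)).
Proof. by move=> fc gc x; exact: continuous_min (fc x) (gc x). Qed.

Lemma continuous_maxr (T : topologicalType) (f g : T -> R) :
  continuous f -> continuous g -> continuous (fun x => Num.max (f x) (g x)).
Proof. by move=> fc gc x; exact: continuous_max (fc x) (gc x). Qed.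

Lemma continuous_fst (T U V : topologicalType) (f : T -> V) :
  continuous f -> continuous (fun p : T * U => f p.1).
Proof.
move=> fc p; apply: (@continuous_comp _ _ _ fst f); first exact: cvg_fst.
exact: fc.
Qed.

Lemma continuous_snd (T U V : topologicalType) (f : U -> V) :
  continuous f -> continuous (fun p : T * U => f p.2).
Proof.
move=> fc p; apply: (@continuous_comp _ _ _ snd f); first exact: cvg_snd.
exact: fc.
Qed.

End Continuity.

Section DeltaGeneratedRow.
Variables (R : realType) (p : nat).

Let c : R := p.+2%:R^-1.
Let c_gt0 : 0 < c. Proof. by rewrite invr_gt0 ltr0n. Qed.
Let barycenter : 'rV[R]_p.+2 := const_mx c.

(* A singular simplex whose image is a neighbourhood of [x]. *)
Let chart (x : 'rV[R]_p.+1) (t : 'rV[R]_p.+2) : 'rV[R]_p.+1 :=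
  \row_i (x ord0 i + t ord0 (widen_ord (leqnSn p.+1) i) - c).

Let chart_continuous x : continuous (chart x).
Proof.
apply: continuous_row => j t; rewrite /chart.
under eq_fun do rewrite mxE.
exact: cvgB (cvgD (cvg_cst _) (@coord_continuous R 1 p.+2 ord0 _ t)) (cvg_cst _).
Qed.

Let barycenter_simplex : simplex R p.+1 barycenter.
Proof.
split=> [i|]; first by rewrite mxE ltW.
under eq_bigr do rewrite mxE.
by rewrite sumr_const card_ord -mulr_natr mulVf ?pnatr_eq0.
Qed.

Let chart_barycenter x : chart x barycenter = x.
Proof. by apply/rowP => i; rewrite !mxE addrK. Qed.

Let chart_onto_ball x del : 0 < del -> exists2 e, 0 < e & forall y, ball x e y ->
  exists2 t, simplex R p.+1 t /\ ball barycenter del t & chart x t = y.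
Proof.
(* With [e = min(del, c) / (p+2)], every coordinate of the preimage [t] of
   [y] stays within [min(del, c)] of [c]. *)
move=> del_gt0; set m := Num.min del c.
have m_gt0 : 0 < m by rewrite lt_min del_gt0 c_gt0.
pose e := m / p.+2%:R.
have e_gt0 : 0 < e by rewrite divr_gt0 // ltr0n.
exists e => // y xy.
pose dl (i : 'I_p.+1) := y ord0 i - x ord0 i.
have dl_lt i : `|dl i| < e.
  by case: xy => _ /(_ ord0 i); rewrite -ball_normE /= distrC.
set S := \sum_i dl i.
have S_le : `|S| <= e * p.+1%:R.
  apply: le_trans (ler_norm_sum _ _ _) _.
  have -> : e * p.+1%:R = \sum_(i < p.+1) e.
    by rewrite sumr_const card_ord mulr_natr.
  by apply: ler_sum => i _; apply: ltW.
have eSm : e * p.+1%:R + e = m.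
  by rewrite -{2}[e]mulr1 -mulrDr natr1 divfK ?pnatr_eq0.
have eP_ge0 : e * p.+1%:R >= 0 by rewrite mulr_ge0 // ltW.
have m_le : m <= del /\ m <= c by rewrite !ge_min !lexx orbT.
pose t : 'rV[R]_p.+2 :=
  \row_(l < p.+2) (if (l < p.+1)%N then c + dl (inord l) else c - S).
exists t; last by apply/rowP => i; rewrite !mxE /= ltn_ord inord_val /dl; lra.
split; last first.
  split => // i l; rewrite (ord1 i) -ball_normE /= !mxE; case: ifP => _.
    by have := dl_lt (inord l); rewrite !ltr_norml; lra.
  by move: S_le; rewrite ler_norml ltr_norml; lra.
split=> [l|].
  rewrite mxE; case: ifP => _; last by move: S_le; rewrite ler_norml; lra.
  by have := dl_lt (inord l); rewrite ltr_norml; lra.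
rewrite big_ord_recr /= mxE /= ltnn.
under eq_bigr => i _ do rewrite mxE /= ltn_ord inord_val.
rewrite big_split /= sumr_const card_ord -/S.
have : c *+ p.+1 + c = 1 by rewrite -mulrSr -mulr_natr mulVf ?pnatr_eq0.
lra.
Qed.

Lemma Delta_generated_rV : Delta_generated R 'rV[R]_p.+1.
Proof.
move=> U hU; rewrite openE => x Ux.
have [V [oV eV]] : exists V, open V /\
    chart x @^-1` U `&` simplex R p.+1 = V `&` simplex R p.+1.
  by apply: hU; apply: continuous_subspaceT => t; exact: chart_continuous.
have inU t : simplex R p.+1 t -> V t -> U (chart x t).
  by move=> st Vt; have [] : (chart x @^-1` U `&` simplex R p.+1) t by rewrite eV.
have /oV/nbhs_ballP [del del_gt0 ballV] : V barycenter.
  have : (chart x @^-1` U `&` simplex R p.+1) barycenter.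
    by split => //; rewrite -(chart_barycenter x) in Ux.
  by rewrite eV => -[].
have [e e_gt0 onto] := chart_onto_ball x del_gt0.
apply/nbhs_ballP; exists e => // y /onto [t [st /ballV Vt] <-].
exact: inU.
Qed.

End DeltaGeneratedRow.

Section LastVertex.
Variables (R : realType) (m : nat).
Implicit Type w : 'rV[R]_m.+1.

Lemma leq_last_vertex w b : w ord0 b != 0 -> (b <= last_vertex w)%N.
Proof.
move=> wb; rewrite /last_vertex inordK; last first.
  by rewrite ltnS; apply/bigmax_leqP => i _; rewrite -ltnS.
exact: (leq_bigmax_cond (F := fun i : 'I_m.+1 => i : nat)).
Qed.

Lemma last_vertex_neq0 w : simplex R m w -> w ord0 (last_vertex w) != 0.
Proof.
case=> _ sum1; have [b wb] : exists b, w ord0 b != 0.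
  apply/existsP; apply: contraTT (oner_neq0 R) => /existsPn w0.
  by rewrite -sum1 big1 ?eqxx // => i _; apply/eqP/negbNE.
have nonempty : (0 < #|[pred i | w ord0 i != 0%R]|)%N.
  by apply/card_gt0P; exists b.
have [a wa aE] := eq_bigmax_cond (fun i : 'I_m.+1 => i : nat) nonempty.
suff -> : last_vertex w = a by [].
by apply: val_inj; rewrite /last_vertex /= aE inordK.
Qed.

Lemma last_vertex_eq w a :
  w ord0 a != 0 -> (forall b, w ord0 b != 0 -> (b <= a)%N) -> last_vertex w = a.
Proof.
move=> wa le_a; apply: val_inj; rewrite /last_vertex /= inordK; last first.
  by rewrite ltnS; apply/bigmax_leqP => i _; rewrite -ltnS.
apply/eqP; rewrite eqn_leq (leq_bigmax_cond (F := fun i : 'I_m.+1 => i : nat)) //.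
by rewrite andbT; apply/bigmax_leqP => b; exact: le_a.
Qed.

End LastVertex.

Lemma ler_sum_nneg_subset (R : numDomainType) I (r : seq I) (P Q : pred I)
    (F : I -> R) : (forall i, 0 <= F i) -> (forall i, Q i -> P i) ->
  \sum_(i <- r | Q i) F i <= \sum_(i <- r | P i) F i.
Proof.
move=> F0 QP; rewrite big_mkcond [leRHS]big_mkcond ler_sum // => i _.
by case: ifP => [/QP ->|_] //; case: ifP.
Qed.

Section PrefixSums.
Variables (R : realType) (m : nat).
Implicit Types v w : 'rV[R]_m.

Definition prefix_sum w (j : nat) : R := \sum_(i < m | (i < j)%N) w ord0 i.

Lemma prefix_sum0 w : prefix_sum w 0 = 0.
Proof. exact: big_pred0. Qed.

Lemma prefix_sumS w (i : 'I_m) : prefix_sum w i.+1 = prefix_sum w i + w ord0 i.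
Proof.
rewrite /prefix_sum (bigD1 i) ?leqnn //= addrC; congr (_ + _).
by apply: eq_bigl => b; rewrite ltnS ltn_neqAle andbC.
Qed.

Lemma prefix_sum_total w j : (m <= j)%N -> prefix_sum w j = \sum_i w ord0 i.
Proof.
by move=> mj; apply: eq_bigl => i; rewrite (leq_trans (ltn_ord i) mj).
Qed.

Lemma le_prefix_sum w j j' :
  (forall i, 0 <= w ord0 i) -> (j <= j')%N -> prefix_sum w j <= prefix_sum w j'.
Proof.
by move=> w0 jj'; apply: ler_sum_nneg_subset => // i /leq_trans; apply.
Qed.

Lemma prefix_sum_ge0 w j : (forall i, 0 <= w ord0 i) -> 0 <= prefix_sum w j.
Proof. by move=> w0; apply: sumr_ge0. Qed.

Lemma prefix_sum_inj v w :
  (forall i : 'I_m, prefix_sum v i.+1 = prefix_sum w i.+1) -> v = w.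
Proof.
move=> vw; apply/rowP => i.
have /eqP := vw i; rewrite !prefix_sumS; case: i => [[|i] lt_im] /=.
  by rewrite !prefix_sum0 !add0r => /eqP.
have lt_i : (i < m)%N by apply: ltnW.
by rewrite (vw (Ordinal lt_i)) => /eqP /addrI.
Qed.

Lemma continuous_prefix_sum j : continuous (prefix_sum ^~ j).
Proof.
by apply: (continuous_big add_continuous) => i _; exact: coord_continuous.
Qed.

Lemma continuous_prefix_sum_pos j :
  continuous (fun w => prefix_sum (map_mx (Num.max 0) w) j).
Proof.
apply: (continuous_big add_continuous) => i _ w; under eq_fun do rewrite mxE.
by apply: continuous_max; [exact: cst_continuous | exact: coord_continuous].
Qed.

End PrefixSums.

Lemma prefix_sum_diff (R : realType) m (G : nat -> R) j : (j <= m)%N ->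
  prefix_sum (\row_(a < m) (G a.+1 - G a)) j = G j - G 0%N.
Proof.
move=> jm; rewrite /prefix_sum.
under eq_bigr do rewrite mxE.
rewrite -(big_ord_widen _ (fun a => G a.+1 - G a) jm).
by rewrite -(big_mkord xpredT (fun a => G a.+1 - G a)) telescope_sumr.
Qed.

Section Factorization.
Variables (d : Order.disp_t) (P : porderType d) (n : nat) (phi : 'I_n.+1 -> P).
Hypothesis phi_mono : simplicial_map phi.

Let L := undup [seq phi a | a <- enum 'I_n.+1].
Let k := (size L).-1.

Let phi_in a : phi a \in L.
Proof. by rewrite mem_undup map_f ?mem_enum. Qed.

Let size_L : size L = k.+1.
Proof. by rewrite prednK // -has_predT; apply/hasP; exists (phi ord0). Qed.

Let L_uniq : uniq L. Proof. exact: undup_uniq. Qed.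

Let L_sorted : sorted <=%O L.
Proof.
apply: subseq_le_sorted (undup_subseq _) _; apply: (homo_sorted phi_mono).
have : sorted leq [seq val a | a <- enum 'I_n.+1].
  by rewrite val_enum_ord iota_sorted.
by rewrite sorted_map; apply: sub_sorted => a b; rewrite leEord.
Qed.

Let phibar (j : 'I_k.+1) : P := nth (phi ord0) L j.

Let index_lt a : (index (phi a) L < k.+1)%N.
Proof. by rewrite -size_L index_mem. Qed.

Let s (a : 'I_n.+1) : 'I_k.+1 := Ordinal (index_lt a).

Let phibar_s a : phibar (s a) = phi a.
Proof. exact: nth_index. Qed.

Let phibar_inj : injective phibar.
Proof. by move=> i j /eqP; rewrite nth_uniq ?size_L // => /eqP/val_inj. Qed.

Let phibar_mono : simplicial_map phibar.
Proof.
move=> i j; rewrite leEord => ij.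
by apply: (le_sorted_leq_nth _ L_sorted); rewrite ?inE ?size_L.
Qed.

Let s_mono : {homo s : a b / (a <= b)%N}.
Proof.
move=> a b ab; rewrite leqNgt; apply/negP => ba.
have : phi a = phi b.
  apply/eqP; rewrite eq_le phi_mono ?leEord //=.
  by rewrite -!phibar_s phibar_mono // leEord ltnW.
by move: ba => /[swap] /= ->; rewrite ltnn.
Qed.

Let s_surj j : exists a, s a = j.
Proof.
have : nth (phi ord0) L j \in L by rewrite mem_nth ?size_L.
rewrite mem_undup => /mapP [a _ ea]; exists a; apply: val_inj.
by rewrite /= -ea index_uniq ?size_L.
Qed.

Lemma simplicial_map_factorization :
  exists k (phibar : 'I_k.+1 -> P) (s : 'I_n.+1 -> 'I_k.+1),
    [/\ simplicial_map phibar, injective phibar, {homo s : a b / (a <= b)%N},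
        forall j, exists a, s a = j & forall a, phi a = phibar (s a)].
Proof. by exists k, phibar, s; split. Qed.

End Factorization.

Section Collapse.
Variables (R : realType) (n k : nat) (s : 'I_n.+1 -> 'I_k.+1).
Hypotheses (s_mono : {homo s : a b / (a <= b)%N})
           (s_surj : forall j, exists a, s a = j).
Implicit Types (t x : 'rV[R]_n.+1) (u : 'rV[R]_k.+1).

Definition collapse t : 'rV[R]_k.+1 := \row_j \sum_(a | s a == j) t ord0 a.

Lemma prefix_sum_collapse t j :
  prefix_sum (collapse t) j = \sum_(a | (s a < j)%N) t ord0 a.
Proof.
rewrite /prefix_sum (partition_big s (fun i : 'I_k.+1 => (i < j)%N)) //=.
apply: eq_bigr => i ij; rewrite mxE; apply: eq_bigl => a.
by case: (s a =P i) => [->|_]; rewrite ?eqxx ?ij ?andbF.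
Qed.

Lemma collapse_simplex t : simplex R n t -> simplex R k (collapse t).
Proof.
case=> t0 t1; split=> [j|]; first by rewrite mxE sumr_ge0.
rewrite -t1 (partition_big s xpredT) //=.
by apply: eq_bigr => j _; rewrite mxE.
Qed.

Lemma last_vertex_collapse t :
  simplex R n t -> last_vertex (collapse t) = s (last_vertex t).
Proof.
move=> st; have [t0 _] := st; have tl := last_vertex_neq0 st.
apply: last_vertex_eq => [|j]; rewrite mxE.
  rewrite lt0r_neq0 // (bigD1 (last_vertex t)) //= ltr_pwDl ?sumr_ge0 //.
  by rewrite lt0r tl t0.
apply: contraR; rewrite -ltnNge => lt_j; rewrite big1 // => a /eqP saj.
apply/eqP; apply: contraTT lt_j => ta.
by rewrite -leqNgt -saj s_mono // leq_last_vertex.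
Qed.

Lemma continuous_collapse : continuous collapse.
Proof.
apply: continuous_row => j; under eq_fun do rewrite mxE.
by apply: (continuous_big add_continuous) => a _; exact: coord_continuous.
Qed.

Definition fiber_last (a : 'I_n.+1) : bool :=
  [forall b, (s b <= s a)%N ==> (b <= a)%N].

Lemma fiber_lastP a : fiber_last a -> forall b, (s b <= s a)%N = (b <= a)%N.
Proof.
move=> /forallP last_a b; apply/idP/idP; first exact/implyP/last_a.
exact: s_mono.
Qed.

Lemma fiber_last_ord_max : fiber_last ord_max.
Proof. by apply/forallP => b; rewrite leq_ord implybT. Qed.

Lemma fiber_last_lt (a b : 'I_n.+1) :
  (a < b)%N -> s a = s b -> fiber_last a = false.
Proof.
move=> ab sab; apply/negP => /fiber_lastP/(_ b).
by rewrite sab leqnn leqNgt ab.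
Qed.

Lemma exists_fiber_last j : exists2 a, s a = j & fiber_last a.
Proof.
have [a0 sa0] := s_surj j.
have [|a saj max_a] := @arg_maxnP _ a0 (fun a => s a == j) val; first exact/eqP.
exists a; first exact/eqP.
apply/forallP => b; apply/implyP; rewrite (eqP saj) leq_eqVlt => /orP[/max_a //|].
by apply: contraTT; rewrite -!ltnNge => /ltnW/s_mono; rewrite (eqP saj).
Qed.

Lemma mono_surj_ord_max : s ord_max = ord_max.
Proof.
have [a saj] := s_surj ord_max; apply/val_inj/eqP.
by rewrite eqn_leq -ltnS ltn_ord -{1}saj /= s_mono // -ltnS.
Qed.

(* The mass of the indices [< b]; the last index of a fibre fills the window,
   so that the fibre of [j] carries exactly [u_j]. *)
Definition cumul u x (b : nat) : R :=
  if b is a.+1 then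
    let a := inord a : 'I_n.+1 in
    if fiber_last a then prefix_sum u (s a).+1
    else Num.min (prefix_sum u (s a).+1)
           (Num.max (prefix_sum u (s a)) (prefix_sum (map_mx (Num.max 0) x) a.+1))
  else 0.

Lemma cumulS u x (a : 'I_n.+1) : cumul u x a.+1 =
  if fiber_last a then prefix_sum u (s a).+1
  else Num.min (prefix_sum u (s a).+1)
         (Num.max (prefix_sum u (s a)) (prefix_sum (map_mx (Num.max 0) x) a.+1)).
Proof. by rewrite /cumul inord_val. Qed.

Section NonnegativeMass.
Variable u : 'rV[R]_k.+1.
Hypothesis u_ge0 : forall j, 0 <= u ord0 j.

Lemma cumul_window x (a : 'I_n.+1) :
  prefix_sum u (s a) <= cumul u x a.+1 <= prefix_sum u (s a).+1.
Proof.
have lohi := le_prefix_sum u_ge0 (leqnSn (s a)).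
rewrite cumulS; case: ifP => _; first by rewrite lohi lexx.
by rewrite le_min lohi le_max lexx ge_min lexx.
Qed.

Lemma le_cumul x (a b : 'I_n.+1) : (a <= b)%N -> cumul u x a.+1 <= cumul u x b.+1.
Proof.
move=> ab; have [sab|sab] := ltnP (s a) (s b).
  have /andP[_ hi_a] := cumul_window x a; have /andP[lo_b _] := cumul_window x b.
  exact: le_trans hi_a (le_trans (le_prefix_sum u_ge0 sab) lo_b).
have {sab}sab : s a = s b by apply/val_inj/eqP; rewrite eqn_leq s_mono.
have [<-|ab'] := eqVneq a b; first exact: lexx.
have ltab : (a < b)%N by rewrite ltn_neqAle ab andbT.
rewrite cumulS (fiber_last_lt ltab sab) [cumul _ _ _]cumulS -sab.
case: ifP => _; first by rewrite ge_min lexx.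
have Xab : prefix_sum (map_mx (Num.max 0) x) a.+1 <=
           prefix_sum (map_mx (Num.max 0) x) b.+1.
  by apply: le_prefix_sum => [i|]; rewrite ?mxE ?le_max ?lexx.
by rewrite le_min ge_min lexx /= ge_min ge_max !le_max lexx Xab !orbT.
Qed.

Lemma cumul_nondecreasing x b : (b <= n)%N -> cumul u x b <= cumul u x b.+1.
Proof.
case: b => [|b] bn.
  have /andP[lo _] := cumul_window x ord0.
  exact: le_trans (prefix_sum_ge0 _ u_ge0) lo.
exact: (@le_cumul x (Ordinal (leqW bn)) (Ordinal (bn : (b.+1 < n.+1)%N))
                  (leqnSn b)).
Qed.

End NonnegativeMass.

Lemma cumul_collapse t b : (forall a, 0 <= t ord0 a) -> (b <= n.+1)%N ->
  cumul (collapse t) t b = prefix_sum t b.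
Proof.
move=> t_ge0; case: b => [_|a an]; first by rewrite prefix_sum0.
change (cumul (collapse t) t (Ordinal an).+1 = prefix_sum t (Ordinal an).+1).
set a' := Ordinal an; rewrite cumulS.
have -> : map_mx (Num.max 0) t = t by apply/rowP => i; rewrite mxE max_r.
have lo : prefix_sum (collapse t) (s a') <= prefix_sum t a'.+1.
  rewrite prefix_sum_collapse; apply: ler_sum_nneg_subset => // b.
  by apply: contraTT; rewrite -!leqNgt => /ltnW/s_mono.
have hi : prefix_sum t a'.+1 <= prefix_sum (collapse t) (s a').+1.
  rewrite prefix_sum_collapse; apply: ler_sum_nneg_subset => // b.
  by rewrite !ltnS => /s_mono.
case: ifP => [/fiber_lastP last_a|_]; last by rewrite max_r // min_r.
by rewrite prefix_sum_collapse; apply: eq_bigl => b; rewrite !ltnS last_a.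
Qed.

Definition redistribute u x : 'rV[R]_n.+1 :=
  \row_(a < n.+1) (cumul u x a.+1 - cumul u x a).

Lemma prefix_sum_redistribute u x b : (b <= n.+1)%N ->
  prefix_sum (redistribute u x) b = cumul u x b.
Proof. by move=> bn; rewrite prefix_sum_diff // subr0. Qed.

Lemma redistribute_simplex u x : simplex R k u -> simplex R n (redistribute u x).
Proof.
case=> u_ge0 u1; split=> [a|].
  by rewrite mxE subr_ge0 cumul_nondecreasing // -ltnS.
rewrite -(prefix_sum_total _ (leqnn n.+1)) prefix_sum_redistribute //.
change (cumul u x (@ord_max n).+1 = 1).
by rewrite cumulS fiber_last_ord_max mono_surj_ord_max prefix_sum_total.
Qed.

Lemma redistribute_collapse t :
  (forall a, 0 <= t ord0 a) -> redistribute (collapse t) t = t.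
Proof.
move=> t_ge0; apply: prefix_sum_inj => a.
by rewrite prefix_sum_redistribute // cumul_collapse.
Qed.

Lemma collapse_redistribute u x : collapse (redistribute u x) = u.
Proof.
apply: prefix_sum_inj => j; have [e <- last_e] := exists_fiber_last j.
rewrite prefix_sum_collapse (eq_bigl (fun a : 'I_n.+1 => (a < e.+1)%N)).
  change (prefix_sum (redistribute u x) e.+1 = prefix_sum u (s e).+1).
  by rewrite prefix_sum_redistribute // cumulS last_e.
by move=> a; rewrite !ltnS fiber_lastP.
Qed.

Lemma continuous_cumul b :
  continuous (fun p : 'rV[R]_k.+1 * 'rV[R]_n.+1 => cumul p.1 p.2 b).
Proof.
case: b => [p|a]; first exact: cvg_cst.
have psum_u j :
    continuous (fun p : 'rV[R]_k.+1 * 'rV[R]_n.+1 => prefix_sum p.1 j).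
  apply: (continuous_fst (f := fun w : 'rV[R]_k.+1 => prefix_sum w j)).
  exact: continuous_prefix_sum.
have psum_x j : continuous (fun p : 'rV[R]_k.+1 * 'rV[R]_n.+1 =>
    prefix_sum (map_mx (Num.max 0) p.2) j).
  apply: (continuous_snd
    (f := fun x : 'rV[R]_n.+1 => prefix_sum (map_mx (Num.max 0) x) j)).
  exact: continuous_prefix_sum_pos.
rewrite /cumul; case: (fiber_last _) => //.
apply: continuous_minr; first exact: psum_u.
by apply: continuous_maxr; [exact: psum_u | exact: psum_x].
Qed.

Lemma continuous_redistribute :
  continuous (fun p : 'rV[R]_k.+1 * 'rV[R]_n.+1 => redistribute p.1 p.2).
Proof.
apply: continuous_row => a p; under eq_fun do rewrite mxE.
by apply: cvgB; exact: continuous_cumul.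
Qed.

End Collapse.

Theorem lemma3p3 (R : realType) (d : Order.disp_t) (P : porderType d)
  (n : nat) (phi : 'I_n.+1 -> P) :
  simplicial_map phi ->
  exists (k : nat) (phibar : 'I_k.+1 -> P) (K : topologicalType)
         (i : 'rV[R]_n.+1 -> 'rV[R]_k.+1 * K)
         (r : 'rV[R]_k.+1 * K -> 'rV[R]_n.+1),
    [/\ simplicial_map phibar /\ injective phibar,
        Delta_generated R K,
        (* i : ||Delta^phi||_P -> ||Delta^phibar||_P (x) K, a map in Top_P *)
        [/\ i @` simplex R n `<=` simplex R k `*` setT,
          {within simplex R n, continuous i} &
          (forall t, simplex R n t -> strat phibar (i t).1 = strat phi t)],
        (* r : ||Delta^phibar||_P (x) K -> ||Delta^phi||_P, a map in Top_P *)
        [/\ r @` (simplex R k `*` setT) `<=` simplex R n,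
          Delta_continuous R (simplex R k `*` setT) r &
          (forall x, (simplex R k `*` setT) x -> strat phi (r x) = strat phibar x.1)]
      & (* retraction: r o i = id *)
        forall t, simplex R n t -> r (i t) = t].
Proof.
move=> /simplicial_map_factorization
  [k [phibar [s [phibar_mono phibar_inj s_mono s_surj phiE]]]].
exists k, phibar, 'rV[R]_n.+1, (fun t => (collapse s t, t)),
  (fun p => redistribute s p.1 p.2).
split=> //; first exact: Delta_generated_rV.
- split.
  + by move=> _ [t st <-]; split=> //; exact: collapse_simplex.
  + apply: continuous_subspaceT => t.
    have collapse_t : {for t, continuous (collapse s)}.
      exact: continuous_collapse.
    exact: cvg_pair collapse_t cvg_id.
  + by move=> t st; rewrite /strat last_vertex_collapse // phiE.
- split.
  + by move=> _ [[u x] [su _] <-]; exact: redistribute_simplex.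
  + move=> m sigma sigma_cont _ t.
    apply: continuous_comp (sigma_cont t) _.
    exact: continuous_redistribute.
  + move=> [u x] [su _] /=.
    rewrite /strat phiE -last_vertex_collapse ?collapse_redistribute //.
    exact: redistribute_simplex.
- by move=> t [t_ge0 _]; exact: redistribute_collapse.
Qed.
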